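(* Let $G=(K\cup I,E)$ be a split graph such that no vertex $i\in I$ satisfies $N(i)=K$, and let $(V,\mathcal{F})$ be its split graph vertex shelling antimatroid. Then the set of paths of $(V,\mathcal{F})$ equals $P=P_1\cup P_2\cup P_3$, where $P_1=\{\{i\}: i\in I\}$, $P_2=\{\{k\}\cup(N(k)\cap I): k\in K\}$, $P_3=\{\operatorname{fos}(i)\cup\{k\}\cup\big((N(k)\cap I)\setminus\{i\}\big): i\in I,\ k\in N(i)\}$.
   Context: A split graph $G=(K\cup I,E)$ is a finite simple graph whose vertex set $V=K\cup I$ comes with a fixed partition into a clique $K$ and an independent set $I$. We write $u\sim v$ for adjacency; for $F\subseteq V$, $N(F)$ is the set of vertices of $V\setminus F$ adjacent to some vertex of $F$, and $N(v)=N(\{v\})$. A vertex is simplicial if its neighbours induce a clique. The split graph vertex shelling antimatroid of $G$ is $(V,\mathcal{F})$ where $F\subseteq V$ is feasible iff there is an ordering $f_1,\dots,f_{|F|}$ of $F$ such that each $f_j$ is simplicial in $G$ minus $\{f_1,\dots,f_{j-1}\}$ (the empty set is feasible). For $i\in I$, $\operatorname{fos}(i)=\{k\in K: k\not\sim i\}\cup\{i'\in I: N(i')\not\subseteq N(i)\}$. A path of an antimatroid $(V,\mathcal{F})$ is a nonempty feasible set that is not the union of two feasible sets both different from it (equivalently, a feasible set containing exactly one element whose removal leaves a feasible set). *)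

(* A finite simple graph is a symmetric irreflexive rel on a finType. *)
From mathcomp Require Import all_boot.
Set Implicit Arguments. Unset Strict Implicit. Unset Printing Implicit Defensive.

Section SplitShelling.
Variables (V : finType) (e : rel V).

Definition nbr (v : V) : {set V} := [set u | e v u].

Definition nbrs (F : {set V}) : {set V} := [set u | (u \notin F) && [exists f in F, e f u]].

Definition simplicial_in (S : {set V}) (v : V) : bool :=
  (v \notin S) &&
  [forall u, forall w,
     [&& u \notin S, w \notin S, e v u, e v w & u != w] ==> e u w].

Fixpoint shelling (S : {set V}) (s : seq V) : bool :=
  if s is x :: s' then simplicial_in S x && shelling (x |: S) s' else true.

Definition feasible (F : {set V}) : Prop :=
  exists s : seq V, [set x in s] = F /\ shelling set0 s.

Definition is_path (F : {set V}) : Prop :=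
  F != set0 /\ feasible F /\
  ~ (exists A B : {set V}, feasible A /\ feasible B /\ A != F /\ B != F /\ A :|: B = F).

Definition fos (K I : {set V}) (i : V) : {set V} :=
  [set k in K | ~~ e k i] :|: [set i' in I | ~~ (nbr i' \subset nbr i)].

End SplitShelling.

From mathcomp Require Import all_boot.
Set Implicit Arguments. Unset Strict Implicit. Unset Printing Implicit Defensive.

(* A path is exactly a feasible set F that is minimal among the feasible sets
   containing its endpoint x, the last vertex of a shelling of F.  Let S be the
   feasible set shelled before x.  If x is in I, then F = {x}.  If x = k is in K
   and all I-neighbours of k lie in S, then F = {k} u (N(k) n I).  Otherwise some
   I-neighbour i of k is still present when k is shelled; simpliciality of k then
   forces all of fos(i) and (N(k) n I) \ {i} into S, so F is the P_3 set of i
   and k.  Conversely every set of P is feasible and, by the same argument,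
   minimal for its last vertex; for {k} u (N(k) n I) this uses that no i in I
   is adjacent to all of K. *)

Section Shelling.
Variables (V : finType) (e : rel V).

Definition is_clique (C : {set V}) := {in C &, forall u v, u != v -> e u v}.

Lemma simplicial_inP (S : {set V}) v :
  reflect (v \notin S /\
           forall u w, u \notin S -> w \notin S -> e v u -> e v w -> u != w -> e u w)
          (simplicial_in e S v).
Proof.
apply: (iffP andP) => -[vS Hv]; split=> //.
  move=> u w uS wS vu vw uw.
  by apply: (implyP (forallP (forallP Hv u) w)); rewrite uS wS vu vw uw.
apply/forallP => u; apply/forallP => w; apply/implyP => /and5P[uS wS vu vw uw].
exact: Hv.
Qed.

Lemma simplicial_in_clique (S C : {set V}) v : v \notin S -> is_clique C ->
  (forall u, u \notin S -> e v u -> u \in C) -> simplicial_in e S v.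
Proof.
move=> vS Ccl vC; apply/simplicial_inP; split=> // u w uS wS vu vw.
by apply: Ccl; apply: vC.
Qed.

Lemma shelling_cat (S : {set V}) s1 s2 :
  shelling e S (s1 ++ s2) = shelling e S s1 && shelling e (S :|: [set x in s1]) s2.
Proof.
elim: s1 S => [|a s1 IH] S /=.
  by congr (shelling e _ s2); apply/setP => x; rewrite !inE orbF.
rewrite IH andbA; congr (_ && shelling e _ s2).
by apply/setP => x; rewrite !inE orbCA orbA.
Qed.

Lemma feasible0 : feasible e set0.
Proof. by exists [::]; rewrite set_nil. Qed.

Lemma feasible_add (F : {set V}) x : feasible e F -> simplicial_in e F x -> feasible e (x |: F).
Proof.
case=> s [<- sh] sx; exists (rcons s x); split.
  by apply/setP => y; rewrite !inE mem_rcons inE.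
by rewrite -cats1 shelling_cat sh /= set0U sx.
Qed.

Lemma feasible_extend (S X : {set V}) : feasible e S ->
  (forall x (T : {set V}), x \in X -> S \subset T -> x \notin T -> simplicial_in e T x) ->
  feasible e (S :|: X).
Proof.
move=> fS simX; rewrite -[X]set_enum.
have : all [in X] (enum X) by apply/allP => x; rewrite mem_enum.
elim/last_ind: (enum X) => [_|s x IHs]; first by rewrite set_nil setU0.
rewrite all_rcons => /andP[xX /IHs fs].
have -> : S :|: [set y in rcons s x] = x |: (S :|: [set y in s]).
  by apply/setP => y; rewrite !inE mem_rcons inE orbCA.
case: (boolP (x \in S :|: [set y in s])) => [xin | xout].
  by move: xin; rewrite -sub1set => /setUidPr ->.
by apply: feasible_add fs _; apply: simX => //; exact: subsetUl.
Qed.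

Lemma feasible_simplicial_prefix (F : {set V}) x : feasible e F -> x \in F ->
  exists S, [/\ feasible e S, S \subset F & simplicial_in e S x].
Proof.
case=> s [<- sh]; rewrite inE => xs.
case/splitPr: xs sh => s1 s2; rewrite shelling_cat /= set0U => /and3P[sh1 sx _].
exists [set y in s1]; split=> //; first by exists s1.
by apply/subsetP => y; rewrite !inE mem_cat => ->.
Qed.

Definition minimal_feasible x (F : {set V}) :=
  [/\ feasible e F, x \in F &
      forall F', feasible e F' -> x \in F' -> F' \subset F -> F' = F].

Lemma is_path_minimal (F : {set V}) : is_path e F <-> exists x, minimal_feasible x F.
Proof.
split=> [[F0 [fF notU]] | [x [fF xF minF]]].
  case: (fF) => s [sF sh]; case/lastP: s sF sh => [|s x] sF sh.
    by case/set0Pn: F0 => y; rewrite -sF inE.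
  have Fx : F = x |: [set y in s].
    by rewrite -sF; apply/setP => y; rewrite !inE mem_rcons inE.
  move: sh; rewrite -cats1 shelling_cat /= set0U => /and3P[sh sx _].
  have xF : x \in F by rewrite Fx setU11.
  exists x; split=> // F' fF' xF' F'F; apply/eqP; apply: contraT => F'neF.
  have /simplicial_inP[xs _] := sx.
  exfalso; apply: notU; exists F', [set y in s].
  split=> //; split; first by exists s.
  split=> //; split; first by apply: contraNneq xs => ->.
  apply/eqP; rewrite eqEsubset subUset F'F {1}Fx subsetUr /= Fx.
  by apply: setSU; rewrite sub1set.
split; first by apply/set0Pn; exists x.
split=> // -[A [B [fA [fB [AF [BF ABF]]]]]].
have : x \in A :|: B by rewrite ABF.
rewrite inE => /orP[xA | xB].
  by move/eqP: AF; apply; apply: minF => //; rewrite -ABF subsetUl.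
by move/eqP: BF; apply; apply: minF => //; rewrite -ABF subsetUr.
Qed.

Lemma minimal_feasibleI x (F : {set V}) : feasible e F -> x \in F ->
  (forall S : {set V}, feasible e S -> S \subset F -> simplicial_in e S x -> F \subset x |: S) ->
  minimal_feasible x F.
Proof.
move=> fF xF Fsub; split=> // F' fF' xF' F'F.
have [S [fS SF' sx]] := feasible_simplicial_prefix fF' xF'.
apply/eqP; rewrite eqEsubset F'F; apply: subset_trans (Fsub S fS _ sx) _.
  exact: subset_trans F'F.
by rewrite subUset sub1set xF'.
Qed.

End Shelling.

Section SplitGraph.
Variables (V : finType) (e : rel V) (K I : {set V}).
Hypotheses (e_sym : symmetric e) (e_irr : irreflexive e)
  (KI_cover : K :|: I = [set: V]) (KI_disj : K :&: I = set0)
  (K_clique : is_clique e K) (I_indep : {in I &, forall u v, ~~ e u v}).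
Hypothesis noFull : forall i, i \in I -> nbr e i != K.

Lemma memK_or_I x : (x \in K) || (x \in I).
Proof. by rewrite -in_setU KI_cover inE. Qed.

Lemma memK_notI x : x \in K -> x \notin I.
Proof.
move=> xK; apply/negP => xI.
by have := in_set0 x; rewrite -KI_disj inE xK xI.
Qed.

Lemma memI_notK i : i \in I -> i \notin K.
Proof. exact/contraL/memK_notI. Qed.

Lemma memK_I_neq k i : k \in K -> i \in I -> k != i.
Proof. by move=> kK iI; apply: contraNneq (memK_notI kK) => ->. Qed.

Lemma nbr_I_K i u : i \in I -> e i u -> u \in K.
Proof.
move=> iI iu; case/orP: (memK_or_I u) => // uI.
by move: (I_indep iI uI); rewrite iu.
Qed.

Lemma is_clique_nbr_I i : i \in I -> is_clique e (i |: nbr e i).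
Proof.
move=> iI u v; rewrite !inE /nbr => /orP[/eqP-> | iu] /orP[/eqP-> | iv] uv.
- by rewrite eqxx in uv.
- by [].
- by rewrite e_sym.
- by apply: K_clique uv; apply: nbr_I_K iI _.
Qed.

Lemma simplicial_I (S : {set V}) i : i \in I -> i \notin S -> simplicial_in e S i.
Proof.
move=> iI iS; apply: simplicial_in_clique K_clique _ => // u _.
exact: nbr_I_K.
Qed.

Lemma feasible_subI (S : {set V}) : S \subset I -> feasible e S.
Proof.
move=> SI; rewrite -[S]set0U; apply: feasible_extend (feasible0 e) _ => x T xS _.
by apply: simplicial_I; apply: (subsetP SI).
Qed.

Definition path_K k := k |: (nbr e k :&: I).
Definition path_KI i k := fos e K I i :|: [set k] :|: ((nbr e k :&: I) :\ i).

Lemma feasible_path_K k : k \in K -> feasible e (path_K k).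
Proof.
move=> kK; apply: feasible_add; first by apply: feasible_subI; exact: subsetIr.
apply: simplicial_in_clique K_clique _; first by rewrite inE negb_and memK_notI ?orbT.
move=> u uN ku; case/orP: (memK_or_I u) => // uI.
by move: uN; rewrite /nbr !inE ku uI.
Qed.

Lemma mem_path_KI i k x : x \in path_KI i k =
  [|| (x \in K) && ~~ e x i, (x \in I) && ~~ (nbr e x \subset nbr e i), x == k
    | [&& x != i, e k x & x \in I]].
Proof. by rewrite /path_KI /fos /nbr !inE !orbA. Qed.

Lemma mem_path_KI_k i k : k \in path_KI i k.
Proof. by rewrite mem_path_KI eqxx !orbT. Qed.

Lemma path_KI_notin i k : i \in I -> e i k -> i \notin path_KI i k.
Proof.
move=> iI ik; have kK := nbr_I_K iI ik.
rewrite mem_path_KI subxx eqxx (negbTE (memI_notK iI)) andbF orbF /=.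
by rewrite eq_sym memK_I_neq.
Qed.

Lemma feasible_path_KI i k : i \in I -> e i k -> feasible e (path_KI i k).
Proof.
move=> iI ik; have kK := nbr_I_K iI ik.
have kQ := mem_path_KI_k i k.
have QK x : x \in path_KI i k -> x \in K -> x != k -> ~~ e x i.
  move=> + xK xk; rewrite mem_path_KI (negbTE (memK_notI xK)) (negbTE xk) xK.
  by rewrite !andbF /= !orbF.
have QI x u : u \in I -> e x u -> ~~ e x i -> u \in path_KI i k.
  move=> uI xu xi; rewrite mem_path_KI uI; apply/orP; right; apply/orP; left.
  by apply/subsetPn; exists x; rewrite /nbr inE e_sym.
(* Shell the I-vertices first, then the other K-vertices, then k: an
   I-neighbour u of a K-vertex x not adjacent to i lies in fos(i). *)
have -> : path_KI i k = k |: ((path_KI i k :&: I) :|: (path_KI i k :&: K :\ k)).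
  apply/setP => x; case: (eqVneq x k) => [->|xk]; first by rewrite setU11 kQ.
  rewrite in_setU1 in_setU in_setD1 !in_setI (negbTE xk) /= -andb_orr.
  by rewrite orbC memK_or_I andbT.
apply: feasible_add.
  apply: feasible_extend; first by apply: feasible_subI; exact: subsetIr.
  move=> x T; rewrite in_setD1 in_setI => /and3P[xk xQ xK] QIT xT.
  apply: simplicial_in_clique K_clique _ => // u uT xu.
  case/orP: (memK_or_I u) => // uI; apply: contraNT uT => _.
  by apply: (subsetP QIT); rewrite in_setI uI andbT; apply: QI xu (QK x xQ xK xk).
apply: simplicial_in_clique (is_clique_nbr_I iI) _.
  by rewrite in_setU in_setI in_setD1 eqxx (negbTE (memK_notI kK)) andbF.
move=> z zT kz; rewrite !inE /nbr; move: zT.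
rewrite in_setU in_setD1 !in_setI !mem_path_KI; case/orP: (memK_or_I z) => [zK | zI].
  have zk : z != k by apply: contraTneq kz => ->; rewrite e_irr.
  by rewrite zK zk e_sym; case: (e i z); rewrite /= ?orbT.
by rewrite zI kz; case: (z == i); rewrite /= ?orbT.
Qed.

Lemma path_KI_sub (S : {set V}) i k : feasible e S -> simplicial_in e S k ->
  k \in K -> i \in I -> e k i -> i \notin S -> path_KI i k \subset k |: S.
Proof.
move=> fS sk kK iI ki iS; have /simplicial_inP[kS ksimp] := sk.
have K_adj y : y \in K -> y != k -> y \notin S -> e y i.
  move=> yK yk yS; apply: ksimp => //; last exact: memK_I_neq.
  by apply: K_clique; rewrite // eq_sym.
have I_in_S y : y \in I -> e k y -> y != i -> y \in S.
  move=> yI ky yi; apply: contraT => yS.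
  by have := I_indep yI iI; rewrite (ksimp y i).
apply/subsetP => y; rewrite mem_path_KI in_setU1.
case: (eqVneq y k) => [//|yk] /=.
case/or3P => [/andP[yK nyi] | /andP[yI /subsetPn[k' yk' ik']] | /and3P[yi ky yI]].
- by apply: contraNT nyi; apply: K_adj.
- rewrite /nbr !inE in yk' ik'.
  have k'K := nbr_I_K yI yk'.
  have k'k : k' != k by apply: contraNneq (ik') => ->; rewrite e_sym.
  have k'S : k' \in S by apply: contraNT (ik') => k'S; rewrite e_sym K_adj.
  have [S' [_ S'S /simplicial_inP[_ k'simp]]] := feasible_simplicial_prefix fS k'S.
  have yi : y != i by apply: contraNneq ik' => <-.
  (* if y were not in S, it would be adjacent to k as both survive k'. *)
  apply: contraT => yS; rewrite -(negbTE yS); apply: I_in_S => //; rewrite e_sym.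
  apply: k'simp => //; first by apply: contra yS; apply: (subsetP S'S).
  - by apply: contra kS; apply: (subsetP S'S).
  - by rewrite e_sym.
  - exact: K_clique.
- exact: I_in_S.
Qed.

Lemma minimal_feasible_I i : i \in I -> minimal_feasible e i [set i].
Proof.
move=> iI; apply: minimal_feasibleI; rewrite ?set11 //.
  by apply: feasible_subI; rewrite sub1set.
by move=> S _ _ _; rewrite sub1set setU11.
Qed.

Lemma minimal_feasible_K k : k \in K -> minimal_feasible e k (path_K k).
Proof.
move=> kK; apply: minimal_feasibleI; [exact: feasible_path_K | exact: setU11 |].
move=> S fS SF sk; have /simplicial_inP[kS _] := sk.
apply/subsetP => y; rewrite /path_K !in_setU1 => /orP[-> // | yN]; apply/orP; right.
apply: contraT => yS; rewrite /nbr !inE in yN; case/andP: yN => ky yI.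
have sub := path_KI_sub fS sk kK yI ky yS.
(* fos(y) :&: K then lies in path_K k :&: K = [set k], so N(y) = K. *)
case/negP: (noFull yI); apply/eqP/setP => z; rewrite /nbr inE.
apply/idP/idP => [/(nbr_I_K yI) // | zK]; apply: contraT => yz.
have zk : z = k.
  have /(subsetP sub) : z \in path_KI y k by rewrite mem_path_KI zK e_sym yz.
  rewrite in_setU1 => /orP[/eqP // | zS].
  have := subsetP SF z zS; rewrite /path_K in_setU1 in_setI.
  by rewrite (negbTE (memK_notI zK)) andbF orbF => /eqP.
by move: yz; rewrite zk e_sym ky.
Qed.

Lemma minimal_feasible_KI i k : i \in I -> e i k -> minimal_feasible e k (path_KI i k).
Proof.
move=> iI ik; apply: minimal_feasibleI; [exact: feasible_path_KI | exact: mem_path_KI_k |].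
move=> S fS SF sk; apply: path_KI_sub => //; first exact: nbr_I_K ik.
  by rewrite e_sym.
by apply: contra (path_KI_notin iI ik); apply: (subsetP SF).
Qed.

Lemma minimal_feasible_cases x (F : {set V}) : minimal_feasible e x F ->
  [\/ exists2 i, i \in I & F = [set i],
      exists2 k, k \in K & F = path_K k
    | exists i k, [/\ i \in I, k \in nbr e i & F = path_KI i k]].
Proof.
case=> fF xF minF; have [S [fS SF sx]] := feasible_simplicial_prefix fF xF.
have eqF P : feasible e P -> x \in P -> P \subset x |: S -> F = P.
  move=> fP xP PS; symmetry; apply: minF => //; apply: subset_trans PS _.
  by rewrite subUset sub1set xF.
case/orP: (memK_or_I x) => [xK | xI].
  case: (boolP (nbr e x :&: I \subset S)) => [NS | /subsetPn[i]].
    apply: Or32; exists x => //.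
    by apply: eqF; [exact: feasible_path_K | exact: setU11 | exact: setUS].
  rewrite /nbr !inE => /andP[xi iI] iS.
  apply: Or33; exists i, x; split=> //; first by rewrite /nbr inE e_sym.
  apply: eqF; [by apply: feasible_path_KI; rewrite // e_sym | exact: mem_path_KI_k |].
  exact: path_KI_sub.
apply: Or31; exists x => //; apply: eqF; rewrite ?set11 ?sub1set ?setU11 //.
by apply: feasible_subI; rewrite sub1set.
Qed.

End SplitGraph.

Theorem mainTheorem10 (V : finType) (e : rel V) (K I : {set V})
  (e_sym : symmetric e) (e_irr : irreflexive e)
  (KI_cover : K :|: I = [set: V]) (KI_disj : K :&: I = set0)
  (K_clique : {in K &, forall u v, u != v -> e u v})
  (I_indep : {in I &, forall u v, ~~ e u v})
  (noFull : forall i, i \in I -> nbr e i != K) :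
  forall F : {set V},
    is_path e F <->
    [\/ exists2 i, i \in I & F = [set i],
        exists2 k, k \in K & F = k |: (nbr e k :&: I)
      | exists i k, [/\ i \in I, k \in nbr e i &
          F = fos e K I i :|: [set k] :|: ((nbr e k :&: I) :\ i)]].
Proof.
move=> F; split=> [/is_path_minimal[x] | PF].
  exact: (minimal_feasible_cases e_sym e_irr KI_cover KI_disj K_clique I_indep).
apply/is_path_minimal; case: PF => [[i iI ->] | [k kK ->] | [i [k [iI ik ->]]]].
- by exists i; apply: (minimal_feasible_I (K := K) (I := I)).
- by exists k; apply: (minimal_feasible_K (K := K) (I := I)).
- exists k; apply: (minimal_feasible_KI (K := K) (I := I)) => //.
  by rewrite /nbr inE in ik.
Qed.
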